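(* Let $G=(V,E)$ be a strongly connected digraph and $s\in V$. Let $r$ be a marked vertex and let $v$ be a vertex that is not a descendant of $r$ in $D(s)$. Then there is a path in $G$ from $v$ to $r$ that contains no vertex of $T(r)\setminus\{r\}$. Moreover, every simple path in $G$ from $v$ to any vertex of $T(r)$ contains the edge $(d(r),r)$.
   Context: For a digraph $G=(V,E)$ and $s\in V$ with every vertex reachable from $s$, $G(s)$ is the flow graph with start vertex $s$; $u$ dominates $w$ if every path from $s$ to $w$ contains $u$; the dominator tree $D(s)$ is the rooted tree on $V$ with root $s$ in which $u$ is an ancestor of $w$ iff $u$ dominates $w$; $d(w)$ is the parent of $w\neq s$. An edge $(u,w)$ is a bridge of $G(s)$ if every path from $s$ to $w$ contains it (then $u=d(w)$). A vertex $w\neq s$ is marked if $(d(w),w)$ is a bridge of $G(s)$. Deleting from $D(s)$ all edges $(d(w),w)$ with $w$ marked decomposes $D(s)$ into a forest of subtrees, each rooted at $s$ or at a marked vertex; $T(v)$ denotes the subtree containing $v$. *)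

From mathcomp Require Import all_boot.
Set Implicit Arguments. Unset Strict Implicit. Unset Printing Implicit Defensive.

Section Dom.
Variables (V : finType) (e : rel V).

Definition gpath (x y : V) (p : seq V) : bool := path e x p && (last x p == y).

Definition uses_edge (x : V) (p : seq V) (u w : V) : bool :=
  (u, w) \in zip (x :: p) p.

Definition dominates (s u w : V) : Prop :=
  forall p, gpath s w p -> u \in s :: p.

(* u = d(w): immediate dominator (parent of w in the dominator tree D(s)) *)
Definition idom (s u w : V) : Prop :=
  u != w /\ dominates s u w /\ (forall x, dominates s x w -> x != w -> dominates s x u).

Definition bridge (s u w : V) : Prop :=
  e u w /\ forall p, gpath s w p -> uses_edge s p u w.

Definition marked (s w : V) : Prop :=
  w != s /\ exists u, idom s u w /\ bridge s u w.

(* x belongs to T(r) for r a marked vertex (or r = s): r is an ancestor of x in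
   D(s) and no marked vertex other than r lies on the tree path from r to x. *)
Definition inT (s r x : V) : Prop :=
  dominates s r x /\
  forall y, marked s y -> dominates s r y -> dominates s y x -> y = r.

End Dom.

(* A path from s to v avoiding r exists since r does not dominate v.  Prefixing
   it to a simple path from v to r shows that no vertex of that path other than
   r is dominated by r, so none lies in T(r) \ {r}.  Conversely, r dominates
   every vertex of T(r), so any path from v into T(r) passes through r; the
   avoiding path followed by its prefix up to r is a path from s to r, which
   must use the bridge (d(r), r), and that edge cannot lie on the avoiding
   part. *)
From mathcomp Require Import all_boot.
From Stdlib Require Import Classical_Prop.

Set Implicit Arguments.
Unset Strict Implicit.
Unset Printing Implicit Defensive.

Lemma uniq_last_in_prefix (T : eqType) (x : T) (p1 p2 : seq T) :
  uniq (x :: p1 ++ p2) -> last x (p1 ++ p2) \in x :: p1 ->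
  last x (p1 ++ p2) = last x p1.
Proof.
case: p2 => [|y p2]; first by rewrite cats0.
rewrite -cat_cons cat_uniq => /and3P[_ disj _]; rewrite last_cat /= => lin.
by case/negP: disj; apply/hasP; exists (last y p2); rewrite ?mem_last.
Qed.

Section Dominators.
Variables (V : finType) (e : rel V).
Implicit Types (a b s r u v w x y z : V) (p q ps : seq V).

Lemma gpath_cat x y z p q :
  gpath e x y p -> gpath e y z q -> gpath e x z (p ++ q).
Proof.
by rewrite /gpath cat_path last_cat => /andP[-> /eqP->] /andP[-> ->].
Qed.

Lemma gpath_prefix x z p1 p2 :
  gpath e x z (p1 ++ p2) -> gpath e x (last x p1) p1.
Proof. by rewrite /gpath cat_path eqxx => /andP[/andP[-> _] _]. Qed.

Lemma uses_edge_cat x p q u w :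
  uses_edge x (p ++ q) u w = uses_edge x p u w || uses_edge (last x p) q u w.
Proof.
rewrite /uses_edge -mem_cat; congr (_ \in _).
by elim: p x => [|y p IH] x //=; rewrite IH.
Qed.

Lemma uses_edge_mem x p u w : uses_edge x p u w -> w \in p.
Proof.
rewrite /uses_edge; elim: p x => [|y p IH] x //=.
by rewrite !inE => /orP[/eqP[_ ->]|/IH ->]; rewrite ?eqxx ?orbT.
Qed.

Lemma dominates_antisym s a b :
  connect e s b -> dominates e s a b -> dominates e s b a -> a = b.
Proof.
case/connectP=> p0 /shortenP[p pp up _] -> dab.
have ain : a \in s :: p by apply: dab; rewrite /gpath pp eqxx.
move: pp up; case/splitPl: ain => p1 p2 la pp up dba.
have bin : last s (p1 ++ p2) \in s :: p1.
  apply: dba; rewrite -la; apply: (gpath_prefix (z := last s (p1 ++ p2)) (p2 := p2)).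
  by rewrite /gpath pp eqxx.
by rewrite -la -(uniq_last_in_prefix up bin).
Qed.

Lemma idom_uniq s u u' w :
  connect e s u' -> idom e s u w -> idom e s u' w -> u = u'.
Proof.
move=> su' [uw [duw minu]] [u'w [du'w minu']].
by apply: dominates_antisym su' (minu' _ duw uw) (minu _ du'w u'w).
Qed.

Lemma avoiding_path_of_not_dominates s r v :
  ~ dominates e s r v -> exists2 p, gpath e s v p & r \notin s :: p.
Proof.
move=> ndom; apply: NNPP => noavoid; apply: ndom => p gp.
by apply: NNPP => rp; apply: noavoid; exists p => //; apply/negP.
Qed.

Lemma not_dominated_on_simple_path s r v ps q x :
  gpath e s v ps -> r \notin s :: ps -> gpath e v r q -> uniq (v :: q) ->
  x \in v :: q -> x != r -> ~ dominates e s r x.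
Proof.
move=> gps nrps gq uq xq; move: gq uq; case/splitPl: xq => q1 q2 lx gq uq xr dx.
have /dx : gpath e s x (ps ++ q1) by rewrite -lx; apply: gpath_cat gps (gpath_prefix gq).
rewrite -cat_cons mem_cat (negbTE nrps) /= => rq1.
have lr : last v (q1 ++ q2) = r by case/andP: gq => _ /eqP.
have rin : last v (q1 ++ q2) \in v :: q1 by rewrite lr inE rq1 orbT.
by move: xr; rewrite -lx -(uniq_last_in_prefix uq rin) lr eqxx.
Qed.

Lemma bridge_on_path_through s u r v ps p :
  bridge e s u r -> gpath e s v ps -> r \notin s :: ps ->
  path e v p -> r \in p -> uses_edge v p u r.
Proof.
move=> [_ br] gps nrps pp rp; move: pp; case/splitPr: rp => p1 p2 pp.
have gvr : gpath e v r (p1 ++ [:: r]).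
  move: pp; rewrite /gpath !cat_path last_cat /= eqxx !andbT.
  by case/andP=> -> /andP[].
have := br _ (gpath_cat gps gvr).
rewrite uses_edge_cat => /orP[/uses_edge_mem rps|].
  by move: nrps; rewrite inE rps orbT.
case/andP: gps => _ /eqP-> used.
by rewrite -cat1s catA uses_edge_cat used.
Qed.

End Dominators.

Theorem mainTheorem7 (V : finType) (e : rel V) (s r v : V) :
  (forall x y : V, connect e x y) ->
  marked e s r ->
  ~ dominates e s r v ->
  (exists p : seq V, gpath e v r p /\
     forall x, x \in v :: p -> inT e s r x -> x = r) /\
  (forall (p : seq V) (z : V), gpath e v z p -> uniq (v :: p) -> inT e s r z ->
     forall u, idom e s u r -> uses_edge v p u r).
Proof.
move=> conn [_ [u0 [idu0 br]]] ndv.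
have [ps gps nrps] := avoiding_path_of_not_dominates ndv.
split.
  case/connectP: (conn v r) => q0 /shortenP[q pq uq _] lr.
  have gq : gpath e v r q by rewrite /gpath pq -lr eqxx.
  exists q; split=> // x xq [dx _]; apply/eqP; apply: contraPT dx.
  exact: not_dominated_on_simple_path gps nrps gq uq xq.
(* The path need not be simple. *)
move=> p z gp _ [dz _] u idu.
rewrite (idom_uniq (conn s u0) idu idu0).
apply: (bridge_on_path_through br gps nrps); first by case/andP: gp.
by move: (dz _ (gpath_cat gps gp)); rewrite -cat_cons mem_cat (negbTE nrps).
Qed.
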